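(* Let $A$ be a setoid, $B$ a setoid family over $A$, and $w,w':W$. Then $w\approx_W w'$ if and only if there are terms \[ \alpha:\mathsf n\,w\approx_A\mathsf n\,w'\quad\text{and}\quad \phi:\prod_{b:B(\mathsf n\,w)}\mathsf b\,w\,b\approx_W\mathsf b\,w'\,(B_\alpha\,b). \]
   Context: Setting: intensional Martin-Löf type theory with $\Pi$-types, record types and a universe $\mathsf U$ closed under $\Pi$ and containing intensional $\Sigma$-types, identity types, unit type, W-types and dependent W-types; propositions-as-types. For a W-type $\mathsf W(A_0,B_0)$ with constructor $\mathsf{sup}$, $\mathsf n$, $\mathsf b$ are node and branch functions ($\mathsf n(\mathsf{sup}\,a\,f)\equiv a$, $\mathsf b(\mathsf{sup}\,a\,f)\equiv f$). $\mathsf{DW}_{I,X,Y,d}:I\to\mathsf U$ denotes the dependent W-type (inductive family with constructor $\mathsf{dsup}\,i\,x\,f:\mathsf{DW}\,i$ for $x:X\,i$, $f:\prod_{y:Y\,i\,x}\mathsf{DW}(d\,i\,x\,y)$). A setoid $A$: type $A_0$ with relation $\approx_A$ and proofs of reflexivity, symmetry, transitivity. A setoid family $B$ over $A$: setoids $B\,a$ (underlying type $B_0\,a$) and transports $B_\alpha:B\,a\to B\,a'$ for $\alpha:a\approx_Aa'$ preserving equality, functorial up to equality, with $B_\alpha,B_{\alpha'}$ pointwise equal for any $\alpha,\alpha'$. Write $b\approx_\alpha b'$ for $B_\alpha b\approx b'$. $W$: with $\mathsf W:=\mathsf W(A_0,B_0)$, let $\approx^Bw\,w':=\mathsf{DW}_{I,X,Y,d}(w,w')$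 with $I:=\mathsf W\times\mathsf W$, $X(w,w'):=\mathsf nw\approx_A\mathsf nw'$, $Y(w,w')\alpha:=\sum_{b,b'}b\approx_\alpha b'$, $d(w,w')\alpha(b,b',\beta):=(\mathsf b\,w\,b,\mathsf b\,w'\,b')$. $W$ is the setoid with underlying type $\sum_{w:\mathsf W}\approx^Bw\,w$ (extensional trees) and $(w,\_)\approx_W(w',\_):=\approx^Bw\,w'$; $w:W$ means an extensional tree with implicit proof. For $w:W$, $\mathsf b\,w\,b$ is again an element of $W$ (immediate subtrees of extensional trees are extensional). *)

(* Plain Rocq (no MathComp needed). Propositions-as-types: all relations
   and proofs live in Type (the universe U is modelled by Type). *)

Record Setoid : Type := {
  car :> Type;
  eqv : car -> car -> Type;
  eqv_refl : forall x, eqv x x;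
  eqv_sym : forall x y, eqv x y -> eqv y x;
  eqv_trans : forall x y z, eqv x y -> eqv y z -> eqv x z
}.
Arguments eqv {s} _ _.
Arguments eqv_refl {s} _.
Arguments eqv_sym {s x y} _.
Arguments eqv_trans {s x y z} _ _.

Record SetoidFam (A : Setoid) : Type := {
  fam :> car A -> Setoid;
  tr : forall a a' : car A, eqv a a' -> fam a -> fam a';
  tr_resp : forall a a' (al : eqv a a') (b b' : fam a),
      eqv b b' -> eqv (tr a a' al b) (tr a a' al b');
  tr_refl : forall a (b : fam a), eqv (tr a a (eqv_refl a) b) b;
  tr_comp : forall a a' a'' (al : eqv a a') (be : eqv a' a'') (b : fam a),
      eqv (tr a' a'' be (tr a a' al b)) (tr a a'' (eqv_trans al be) b);
  tr_irr : forall a a' (al al' : eqv a a') (b : fam a),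
      eqv (tr a a' al b) (tr a a' al' b)
}.
Arguments tr {A} s {a a'} al b.

Inductive Wt (A0 : Type) (B0 : A0 -> Type) : Type :=
  sup : forall a : A0, (B0 a -> Wt A0 B0) -> Wt A0 B0.
Arguments sup {A0 B0} a f.

Definition wn {A0 B0} (w : Wt A0 B0) : A0 := match w with sup a _ => a end.
Definition wb {A0 B0} (w : Wt A0 B0) : B0 (wn w) -> Wt A0 B0 :=
  match w return B0 (wn w) -> Wt A0 B0 with sup a f => f end.

Inductive DW (I : Type) (X : I -> Type) (Y : forall i, X i -> Type)
    (d : forall i (x : X i), Y i x -> I) : I -> Type :=
  dsup : forall i (x : X i), (forall y : Y i x, DW I X Y d (d i x y)) -> DW I X Y d i.
Arguments dsup {I X Y d} i x f.

Definition dw_node {I X Y d} {i : I} (p : DW I X Y d i) : X i :=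
  match p with dsup _ x _ => x end.
Definition dw_br {I X Y d} {i : I} (p : DW I X Y d i) :
    forall y : Y i (dw_node p), DW I X Y d (d i (dw_node p) y) :=
  match p in DW _ _ _ _ i return forall y : Y i (dw_node p), DW I X Y d (d i (dw_node p) y)
  with dsup _ x f => f end.

Section Bisim.
Variables (A : Setoid) (B : SetoidFam A).

Definition W0 := Wt (car A) (fun a => car (B a)).

Definition bX (i : W0 * W0) : Type := eqv (wn (fst i)) (wn (snd i)).
Definition bY (i : W0 * W0) (al : bX i) : Type :=
  { b : car (B (wn (fst i))) & { b' : car (B (wn (snd i))) & eqv (tr B al b) b' } }.
Definition bd (i : W0 * W0) (al : bX i) (y : bY i al) : W0 * W0 :=
  (wb (fst i) (projT1 y), wb (snd i) (projT1 (projT2 y))).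

Definition eqB (w w' : W0) : Type := DW (W0 * W0) bX bY bd (w, w').

(** Extensional trees: the underlying type of the setoid W. *)
Definition Wc : Type := { w : W0 & eqB w w }.
Definition Weq (w w' : Wc) : Type := eqB (projT1 w) (projT1 w').

Definition Wn (w : Wc) : car A := wn (projT1 w).

Definition Wsub (w : Wc) (b : car (B (Wn w))) : Wc :=
  let p := projT2 w in
  existT _ (wb (projT1 w) b)
    (dw_br p (existT _ b (existT _ b
       (eqv_trans (tr_irr A B _ _ (dw_node p) (eqv_refl _) b) (tr_refl A B _ b))))).
End Bisim.
Arguments Wc {A} B.
Arguments Weq {A B} w w'.
Arguments Wn {A B} w.
Arguments Wsub {A B} w b.

(* The relation ≈^B is an inductive bisimulation, so the forward direction
   just reads off the root of a proof of w ≈ w' and its branch at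
   (b, B_α b, refl).  Conversely, the constructor of ≈^B asks for
   b w b ≈ b w' b' for every b' with B_α b ≈ b', whereas phi only gives it at
   b' = B_α b; the gap is closed because w' is extensional, so
   b w' (B_α b) ≈ b w' b', and ≈^B is transitive (by induction on the first
   proof, using functoriality of transport). *)


Section Bisimilarity.
Variables (A : Setoid) (B : SetoidFam A).

Local Notation W0 := (W0 A B).
Local Notation eqB := (eqB A B).
Local Notation bisim_at := (DW (W0 * W0) (bX A B) (bY A B) (bd A B)).

Lemma tr_loop (a : car A) (al : eqv a a) (b : B a) : eqv (tr B al b) b.
Proof.
  exact (eqv_trans (tr_irr A B _ _ al (eqv_refl a) b) (tr_refl A B a b)).
Defined.

Lemma eqB_branch (w w' : W0) (q : eqB w w') (b : B (wn w)) :
  eqB (wb w b) (wb w' (tr B (dw_node q) b)).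
Proof.
  exact (dw_br q (existT _ b (existT _ (tr B (dw_node q) b) (eqv_refl _)))).
Defined.

Lemma eqB_refl_branch (w : W0) (p : eqB w w) (b b' : B (wn w)) :
  eqv b b' -> eqB (wb w b) (wb w b').
Proof.
  intro e.
  exact (dw_br p (existT _ b (existT _ b' (eqv_trans (tr_loop _ (dw_node p) b) e)))).
Defined.

Lemma bisim_at_trans (i : W0 * W0) (q1 : bisim_at i) (w : W0) :
  eqB (snd i) w -> eqB (fst i) w.
Proof.
  revert w; induction q1 as [i al f IH]; intros w q2.
  set (al2 := dw_node q2 : eqv (wn (snd i)) (wn w)).
  refine (dsup (fst i, w) (eqv_trans al al2) _).
  intros [b [b'' e]]; simpl in *.
  apply (IH (existT _ b (existT _ (tr B al b) (eqv_refl _)))).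
  exact (dw_br q2 (existT _ (tr B al b)
                    (existT _ b'' (eqv_trans (tr_comp A B _ _ _ al al2 b) e)))).
Defined.

Lemma eqB_trans (w1 w2 w3 : W0) : eqB w1 w2 -> eqB w2 w3 -> eqB w1 w3.
Proof. exact (fun q => bisim_at_trans (w1, w2) q w3). Defined.

End Bisimilarity.

Theorem lemma3p3 (A : Setoid) (B : SetoidFam A) (w w' : Wc B) :
  (Weq w w' ->
     { al : eqv (Wn w) (Wn w') &
       forall b : car (B (Wn w)), Weq (Wsub w b) (Wsub w' (tr B al b)) })
  * ({ al : eqv (Wn w) (Wn w') &
       forall b : car (B (Wn w)), Weq (Wsub w b) (Wsub w' (tr B al b)) }
     -> Weq w w').
Proof.
  destruct w as [w0 p], w' as [w0' p']; split.
  - intro q; exists (dw_node q).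
    exact (eqB_branch A B w0 w0' q).
  - intros [al phi].
    refine (dsup (w0, w0') al _).
    intros [b [b' e]]; simpl in *.
    apply (eqB_trans A B _ (wb w0' (tr B al b))).
    + exact (phi b).
    + exact (eqB_refl_branch A B w0' p' _ _ e).
Qed.
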